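(* For every feasible basis $B$ of a system $Ax=b$, $x\in\mathbb{R}^d_{\geq 0}$ that satisfies the dominance condition, the submatrix $\hat A_B$ (columns of the normalized matrix $\hat A$ indexed by $B$) covers a permutation matrix.
   Context: $A\in\mathbb{R}^{n\times d}_{\geq 0}$ has a nonzero entry in each column and $b>0$. A feasible basis is $B\subset[d]$ with $A_B$ square nonsingular and the unique solution of $Ax=b$ supported in $B$ nonnegative. The normalized matrix is $\hat A=(\operatorname{diag} b)^{-1}A(\operatorname{diag} u)^{-1}$, where $u_j$ is the largest entry of the $j$th column of $(\operatorname{diag} b)^{-1}A$; it has entries in $[0,1]$ and a $1$-entry in each column. A matrix covers another if their difference is entrywise nonnegative. The system satisfies the dominance condition if $\hat A$ satisfies (a) some $n\times n$ submatrix covers a permutation matrix, and (b) every $n\times n$ submatrix covering a permutation matrix has all row sums less than $2$. *)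

From mathcomp Require Import all_boot all_order all_algebra all_fingroup.
Set Implicit Arguments. Unset Strict Implicit. Unset Printing Implicit Defensive.
Import Order.TTheory GRing.Theory Num.Theory.
Local Open Scope ring_scope.

Section Defs.
Variable R : realFieldType.

Definition colmax n d (A : 'M[R]_(n, d)) (b : 'cV[R]_n) (j : 'I_d) : R :=
  \big[Num.max/0]_(i < n) (A i j / b i 0).

Definition normalized n d (A : 'M[R]_(n, d)) (b : 'cV[R]_n) : 'M[R]_(n, d) :=
  \matrix_(i, j) (A i j / (b i 0 * colmax A b j)).

Definition covers m n (M N : 'M[R]_(m, n)) : Prop :=
  forall i j, 0 <= M i j - N i j.

Definition covers_perm n (M : 'M[R]_n) : Prop :=
  exists s : 'S_n, covers M (perm_mx s).

(* A column selection B subset [d] with |B| = n is given by an injective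
   f : 'I_n -> 'I_d (ordering of B is immaterial); A_B = colsub f A. *)
Definition feasible_basis n d (A : 'M[R]_(n, d)) (b : 'cV[R]_n)
  (f : 'I_n -> 'I_d) : Prop :=
  injective f /\ colsub f A \in unitmx /\
  (forall k, 0 <= (invmx (colsub f A) *m b) k 0).

Definition dominance n d (A : 'M[R]_(n, d)) (b : 'cV[R]_n) : Prop :=
  let Ah := normalized A b in
  (exists f : 'I_n -> 'I_d, injective f /\ covers_perm (colsub f Ah)) /\
  (forall f : 'I_n -> 'I_d, injective f -> covers_perm (colsub f Ah) ->
     forall i, \sum_(j < n) colsub f Ah i j < 2).

End Defs.

(* Put y_k = u_(f k) x_k, so that y >= 0 and \hat A_B y = 1.  Pick for each
   basis column k a row r k where \hat A_B has an entry >= 1.  If r is onto, it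
   is a permutation and \hat A_B covers it.  Otherwise some row i0 is missed.
   By (b), a column of a dominating selection g has an entry >= 1 only in the
   row it covers, so replacing, for every row h hit by r, the column of g at h
   by the basis column of the class r^-1(h) that is largest in row i0 yields
   another dominating selection, whose row i0 then sums to less than 1 off its 1-entry.
   But every class of r carries y-mass at most 1, so this sum bounds row i0 of
   \hat A_B y = 1 from above. *)

From mathcomp Require Import all_boot all_order all_algebra all_fingroup.
From mathcomp Require Import ring lra.
Set Implicit Arguments. Unset Strict Implicit. Unset Printing Implicit Defensive.
Import Order.TTheory GRing.Theory Num.Theory.
Local Open Scope ring_scope.

Section CoversPerm.
Variable R : realFieldType.

Lemma covers_perm_mxP n (M : 'M[R]_n) (s : 'S_n) :
  (forall i j, 0 <= M i j) -> covers M (perm_mx s) <-> forall i, 1 <= M i (s i).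
Proof.
move=> M_ge0; split=> [covM i | M_ge1 i j].
  by have := covM i (s i); rewrite !mxE eqxx subr_ge0.
by rewrite !mxE; case: eqP => [<- | _]; rewrite ?subr_ge0 ?subr0.
Qed.

Lemma covers_perm_onto n (M : 'M[R]_n) (r : 'I_n -> 'I_n) :
  (forall i j, 0 <= M i j) -> (forall i, exists k, r k = i) ->
  (forall k, 1 <= M (r k) k) -> covers_perm M.
Proof.
move=> M_ge0 r_onto M_ge1.
have r_inj : injective r.
  apply: in2T; apply/image_injP/eqP; apply: eq_card => i.
  by have [k <-] := r_onto i; rewrite codom_f.
exists (perm r_inj)^-1%g; apply/covers_perm_mxP => // i.
by rewrite -{1}[i](permKV (perm r_inj)) permE.
Qed.

End CoversPerm.

Lemma sum_mul_le_partition_bound (R : numDomainType) (I J : finType)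
    (r : I -> J) (y F : I -> R) (M : J -> R) :
  (forall k, 0 <= y k) -> (forall j, 0 <= M j) -> (forall k, F k <= M (r k)) ->
  (forall j, \sum_(k | r k == j) y k <= 1) ->
  \sum_k F k * y k <= \sum_j M j.
Proof.
move=> y_ge0 M_ge0 F_le mass_le1.
apply: le_trans (_ : _ <= \sum_k M (r k) * y k) _.
  by apply: ler_sum => k _; rewrite ler_wpM2r.
rewrite (partition_big r predT) //=; apply: ler_sum => j _.
have -> : \sum_(k | r k == j) M (r k) * y k = M j * \sum_(k | r k == j) y k.
  by rewrite mulr_sumr; apply: eq_bigr => k /eqP ->.
exact: ler_piMr.
Qed.

Section Dominance.
Variables (R : realFieldType) (n d : nat) (N : 'M[R]_(n, d)).
Hypothesis N_ge0 : forall i j, 0 <= N i j.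
Hypothesis rowsum_lt2 : forall {g}, injective g -> covers_perm (colsub g N) ->
  forall i, \sum_(j < n) colsub g N i j < 2.

Section Patch.
Variables (g : 'I_n -> 'I_d) (s : 'S_n).
Hypothesis g_inj : injective g.
Hypothesis g_ge1 : forall i, 1 <= N i (g (s i)).

Let g_covers : covers_perm (colsub g N).
Proof. by exists s; apply/covers_perm_mxP => [i j|i]; rewrite mxE. Qed.

Lemma cover_row_unique h i : 1 <= N h (g (s i)) -> h = i.
Proof.
move=> N_ge1; apply/eqP; apply: contraT => hi.
have := rowsum_lt2 g_inj g_covers h.
rewrite (bigD1 (s h)) // (bigD1 (s i)) /=; last first.
  by rewrite (inj_eq perm_inj) eq_sym.
rewrite !mxE; have := g_ge1 h.
have : 0 <= \sum_(j | (j != s h) && (j != s i)) colsub g N h j.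
  by apply: sumr_ge0 => j _; rewrite mxE.
move: (\sum_(j | _) _) => S; lra.
Qed.

Variable p : 'I_n -> option 'I_d.
Hypothesis p_ge1 : forall {h c}, p h = Some c -> 1 <= N h c.
Hypothesis p_inj : forall {h1 h2 c}, p h1 = Some c -> p h2 = Some c -> h1 = h2.

Let patch h := odflt (g (s h)) (p h).

Lemma patch_inj : injective patch.
Proof.
rewrite /patch => h1 h2.
case E1: (p h1) => [c1|]; case E2: (p h2) => [c2|] /=.
- by move=> c12; subst c2; exact: p_inj E1 E2.
- by move=> c1E; have := p_ge1 E1; rewrite c1E => /cover_row_unique h12; subst.
- by move=> c2E; have := p_ge1 E2; rewrite -c2E => /cover_row_unique h21; subst.
- by move/g_inj/perm_inj.
Qed.

Lemma patch_covers : covers_perm (colsub patch N).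
Proof.
exists 1%g; apply/covers_perm_mxP => [i j|i]; rewrite mxE ?perm1 //.
by rewrite /patch; case E: (p i) => [c|] /=; [exact: p_ge1 | exact: g_ge1].
Qed.

Lemma patched_rowsum_lt1 i : p i = None -> \sum_h oapp (N i) 0 (p h) < 1.
Proof.
move=> p_i.
have := rowsum_lt2 patch_inj patch_covers i.
rewrite (bigD1 i) //= [X in X < 1](bigD1 i) //= !mxE p_i /= add0r.
have := g_ge1 i.
have : \sum_(h | h != i) oapp (N i) 0 (p h)
         <= \sum_(h | h != i) colsub patch N i h.
  by apply: ler_sum => h _; rewrite mxE /patch; case: (p h).
rewrite [patch i]/patch p_i /=; lra.
Qed.

End Patch.

Section Basis.
Variables (f : 'I_n -> 'I_d) (y : 'I_n -> R) (r : 'I_n -> 'I_n).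
Hypothesis f_inj : injective f.
Hypothesis y_ge0 : forall k, 0 <= y k.
Hypothesis basis_eq : forall i, \sum_k N i (f k) * y k = 1.
Hypothesis r_ge1 : forall k, 1 <= N (r k) (f k).

Lemma class_mass_le1 h : \sum_(k | r k == h) y k <= 1.
Proof.
rewrite -(basis_eq h) [X in _ <= X](bigID (fun k => r k == h)) /=.
apply: le_trans (_ : _ <= \sum_(k | r k == h) N h (f k) * y k) _.
  by apply: ler_sum => k /eqP rk; rewrite ler_peMl // -rk.
by rewrite lerDl sumr_ge0 // => k _; rewrite mulr_ge0.
Qed.

Definition class_argmax i0 h : option 'I_n :=
  if [pick k | r k == h] is Some k0
  then Some [arg max_(k > k0 | r k == h) N i0 (f k)]%O else None.

Lemma class_argmax_mem i0 h k : class_argmax i0 h = Some k -> r k = h.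
Proof.
rewrite /class_argmax; case: pickP => // k0 rk0 [<-].
by case: arg_maxP => //= k1 /eqP.
Qed.

Lemma class_argmax_max i0 k :
  exists2 k', class_argmax i0 (r k) = Some k' & N i0 (f k) <= N i0 (f k').
Proof.
rewrite /class_argmax; case: pickP => [k0 rk0 | /(_ k)]; last by rewrite eqxx.
by eexists; first reflexivity; case: arg_maxP => // k1 _; apply; rewrite /=.
Qed.

Lemma rows_onto (g : 'I_n -> 'I_d) (s : 'S_n) :
  injective g -> (forall i, 1 <= N i (g (s i))) -> forall i0, exists k, r k = i0.
Proof.
move=> g_inj g_ge1 i0; case: (pickP (fun k => r k == i0)) => [k /eqP | r_i0].
  by exists k.
pose p h := omap f (class_argmax i0 h).
have p_ge1 h c : p h = Some c -> 1 <= N h c.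
  rewrite /p; case E: class_argmax => [k|] //= [<-].
  by rewrite -(class_argmax_mem E).
have p_inj h1 h2 c : p h1 = Some c -> p h2 = Some c -> h1 = h2.
  rewrite /p; case E1: class_argmax => [k1|] //=.
  case E2: class_argmax => [k2|] //= [<-] [/f_inj k12].
  by rewrite -(class_argmax_mem E1) -(class_argmax_mem E2) k12.
have p_i0 : p i0 = None.
  by rewrite /p /class_argmax; case: pickP => // k; rewrite r_i0.
suff : 1 <= \sum_h oapp (N i0) 0 (p h).
  by rewrite leNgt (patched_rowsum_lt1 g_inj g_ge1 p_ge1 p_inj p_i0).
rewrite -(basis_eq i0).
apply: sum_mul_le_partition_bound y_ge0 _ _ class_mass_le1 => [h | k].
  by case: (p h) => //= c; exact: N_ge0.
by rewrite /p; have [k' -> le_k'] := class_argmax_max i0 k.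
Qed.

End Basis.

Lemma basis_covers_perm (g f : 'I_n -> 'I_d) (y : 'I_n -> R) :
  injective g -> covers_perm (colsub g N) -> (forall j, exists i, 1 <= N i j) ->
  injective f -> (forall k, 0 <= y k) -> (forall i, \sum_k N i (f k) * y k = 1) ->
  covers_perm (colsub f N).
Proof.
have colsub_ge0 (h : 'I_n -> 'I_d) i j : 0 <= colsub h N i j by rewrite mxE.
move=> g_inj [s /covers_perm_mxP g_ge1] col_ge1 f_inj y_ge0 basis_eq.
have [r r_ge1] := fin_all_exists (fun k => col_ge1 (f k)).
apply: (covers_perm_onto (r := r)) => // [i0 | k]; last by rewrite mxE.
apply: (rows_onto f_inj y_ge0 basis_eq r_ge1 (s := s) g_inj) => i.
by have := g_ge1 (colsub_ge0 g) i; rewrite mxE.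
Qed.

End Dominance.

Section Normalized.
Variables (R : realFieldType) (n d : nat) (A : 'M[R]_(n, d)) (b : 'cV[R]_n).
Hypothesis A_ge0 : forall i j, 0 <= A i j.
Hypothesis A_col : forall j, exists i, A i j != 0.
Hypothesis b_gt0 : forall i, 0 < b i 0.

Lemma colmax_gt0 j : 0 < colmax A b j.
Proof.
have [i Aij] := A_col j.
have : 0 < A i j / b i 0 by rewrite divr_gt0 // lt0r Aij A_ge0.
by move/lt_le_trans; apply; exact: (le_bigmax _ (fun i => A i j / b i 0)).
Qed.

Lemma normalized_ge0 i j : 0 <= normalized A b i j.
Proof. by rewrite mxE divr_ge0 // mulr_ge0 ?ltW ?colmax_gt0. Qed.

Lemma normalized_col_has1 j : exists i, normalized A b i j = 1.
Proof.
have [i0 _] := A_col j.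
have [i _ colE] := eq_bigmax (x := 0) i0 predT (fun i => A i j / b i 0) isT
  (fun i _ => divr_ge0 (A_ge0 i j) (ltW (b_gt0 i))).
have {}colE : colmax A b j = A i j / b i 0 by exact: colE.
exists i; rewrite mxE invfM mulrA -colE divff //.
exact: lt0r_neq0 (colmax_gt0 j).
Qed.

Lemma normalized_basis_solution f : feasible_basis A b f ->
  exists2 y : 'I_n -> R, forall k, 0 <= y k &
    forall i, \sum_k normalized A b i (f k) * y k = 1.
Proof.
move=> [_ [Af_unit x_ge0]]; set x := invmx _ *m b in x_ge0.
exists (fun k => colmax A b (f k) * x k 0) => [k | i].
  exact: mulr_ge0 (ltW (colmax_gt0 _)) (x_ge0 k).
have Ax : (colsub f A *m x) i 0 = b i 0 by rewrite mulKVmx.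
rewrite mxE in Ax; rewrite -(divff (lt0r_neq0 (b_gt0 i))) -{1}Ax mulr_suml.
apply: eq_bigr => k _; rewrite !mxE.
by field; rewrite !lt0r_neq0 ?b_gt0 ?colmax_gt0.
Qed.

End Normalized.

Theorem lemma4p8 (R : realFieldType) (n d : nat) (A : 'M[R]_(n, d)) (b : 'cV[R]_n) :
  (forall i j, 0 <= A i j) ->
  (forall j, exists i, A i j != 0) ->
  (forall i, 0 < b i 0) ->
  dominance A b ->
  forall f : 'I_n -> 'I_d, feasible_basis A b f ->
  covers_perm (colsub f (normalized A b)).
Proof.
move=> A_ge0 A_col b_gt0 [[g [g_inj g_covers]] rowsum_lt2] f f_basis.
have [y y_ge0 basis_eq] := normalized_basis_solution A_ge0 A_col b_gt0 f_basis.
have col_ge1 j : exists i, 1 <= normalized A b i j.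
  have [i Nij] := normalized_col_has1 A_ge0 A_col b_gt0 j.
  by exists i; rewrite Nij.
have [f_inj _] := f_basis.
exact: (basis_covers_perm (normalized_ge0 A_ge0 A_col b_gt0) rowsum_lt2
  g_inj g_covers col_ge1 f_inj y_ge0 basis_eq).
Qed.
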